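(* Let $\mathcal{G}=(\mathcal{V},\mathcal{E})$ be a directed graph with terminals $s,t$, $f:2^{\mathcal{E}}\to\mathbb{R}_+$ normalized, monotone nondecreasing and submodular, and $C^*$ an $(s,t)$-cut minimizing $f$. Consider the deterministic greedy heuristic: start with $C=\emptyset$, $y=0\in\{0,1\}^{\mathcal{E}}$; while the shortest $(s,t)$-path $P_{\min}$ with respect to edge lengths $y$ has $\sum_{e\in P_{\min}}y(e)<1$, add to $C$ an edge of $P_{\min}$ with minimum marginal cost $f(e\mid C)$ and set its $y$-value to $1$; let $\widehat C_d$ be the returned solution. Then $f(\widehat C_d)\le |\widehat C_d|\,f(C^* )$, and this approximation factor cannot be improved in general.
   Context: An $(s,t)$-cut is a set of edges whose removal disconnects all $s$-$t$ paths. $f(e\mid C)=f(C\cup\{e\})-f(C)$. *)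

From HB Require Import structures.
From mathcomp Require Import all_boot all_order all_algebra.
Set Implicit Arguments. Unset Strict Implicit. Unset Printing Implicit Defensive.
Import Order.TTheory GRing.Theory Num.Theory.
Local Open Scope ring_scope.

Section Graph.
Variables (V E : finType) (src tgt : E -> V).

Fixpoint is_walk (x t : V) (p : seq E) : bool :=
  match p with
  | [::] => x == t
  | e :: p' => (src e == x) && is_walk (tgt e) t p'
  end.

Definition st_path (s t : V) (p : seq E) : bool :=
  is_walk s t p && uniq (s :: map tgt p).

Definition is_cut (s t : V) (C : {set E}) : Prop :=
  forall p, st_path s t p -> has (fun e => e \in C) p.

Variable R : realFieldType.

Definition normalized (f : {set E} -> R) := f set0 = 0.
Definition nonneg_fun (f : {set E} -> R) := forall A, 0 <= f A.
Definition monotone_fun (f : {set E} -> R) :=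
  forall A B : {set E}, A \subset B -> f A <= f B.
Definition submodular (f : {set E} -> R) :=
  forall A B : {set E}, f (A :|: B) + f (A :&: B) <= f A + f B.

Definition marg (f : {set E} -> R) (e : E) (C : {set E}) : R :=
  f (e |: C) - f C.

(* edge lengths y = indicator of C, and the y-length of a path *)
Definition ylen (C : {set E}) (p : seq E) : R :=
  \sum_(e <- p) (if e \in C then 1 else 0).

Definition shortest_path (s t : V) (C : {set E}) (P : seq E) : Prop :=
  st_path s t P /\ forall Q, st_path s t Q -> ylen C P <= ylen C Q.

(* One iteration of the greedy loop with current solution C adds edge e:
   some shortest path P_min (w.r.t. y = 1_C) has length < 1, e lies on
   P_min and has minimum marginal cost among the edges of P_min. *)
Definition greedy_step (f : {set E} -> R) (s t : V) (C : {set E}) (e : E) : Prop :=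
  exists P, [/\ shortest_path s t C P, ylen C P < 1, e \in P &
            forall e', e' \in P -> marg f e C <= marg f e' C].

Definition greedy_stop (s t : V) (C : {set E}) : Prop :=
  ~ exists P, shortest_path s t C P /\ ylen C P < 1.

(* es = sequence of edges added by a complete run of the heuristic
   (any tie-breaking); the returned solution is [set e in es]. *)
Definition greedy_run (f : {set E} -> R) (s t : V) (es : seq E) : Prop :=
  (forall i, (i < size es)%N ->
     forall e0, greedy_step f s t [set x in take i es] (nth e0 es i)) /\
  greedy_stop s t [set x in es].

End Graph.

From HB Require Import structures.
From mathcomp Require Import all_boot all_order all_algebra.
Import Order.TTheory GRing.Theory Num.Theory.
Local Open Scope ring_scope.

(* Every greedy step happens on a path of y-length < 1, i.e. an (s,t)-path
   avoiding the current solution C; the optimal cut Cstar meets that path in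
   some edge e', and by submodularity and monotonicity the chosen marginal cost
   is at most f(e' | C) <= f {e'} <= f Cstar.  Summing over the steps that
   actually enlarge the solution gives the bound.  It is attained on the graph
   made of n parallel edges s -> m followed by one edge m -> t, with f the
   cardinality: Cstar = {m -> t} costs 1, while ties let the greedy pick all n
   parallel edges. *)

Section Greedy.
Variables (R : realFieldType) (V E : finType) (src tgt : E -> V) (s t : V).

Lemma ylenE (C : {set E}) p : ylen R C p = (count [in C] p)%:R.
Proof.
elim: p => [|e p IH]; first by rewrite /ylen big_nil.
by rewrite /ylen big_cons -/(ylen R C p) IH natrD; case: (e \in C).
Qed.

Lemma ylen_lt1 (C : {set E}) p : (ylen R C p < 1) = ~~ has [in C] p.
Proof. by rewrite ylenE ltrn1 has_count -leqNgt. Qed.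

Variable f : {set E} -> R.

Lemma marg_le_singleton e C :
  nonneg_fun f -> submodular f -> marg f e C <= f [set e].
Proof.
move=> f_ge0 f_sub; rewrite /marg lerBlDr.
by apply: le_trans (f_sub [set e] C); rewrite lerDl.
Qed.

Lemma greedy_step_marg_le (Cstar C : {set E}) e :
  nonneg_fun f -> monotone_fun f -> submodular f ->
  is_cut src tgt s t Cstar -> greedy_step src tgt f s t C e ->
  marg f e C <= f Cstar.
Proof.
move=> f_ge0 f_mon f_sub Cstar_cut [P [[P_path _] _ _ e_min]].
have /hasP [e' e'P e'Cstar] := Cstar_cut _ P_path.
apply: le_trans (e_min _ e'P) _.
apply: le_trans (marg_le_singleton _ _ f_ge0 f_sub) _.
by apply: f_mon; rewrite sub1set.
Qed.

Lemma le_card_mul_of_marg_le (c : R) (es : seq E) :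
  normalized f ->
  (forall i, (i < size es)%N -> forall e0,
     marg f (nth e0 es i) [set x in take i es] <= c) ->
  f [set x in es] <= #|[set x in es]|%:R * c.
Proof.
move=> f0; elim/last_ind: es => [_|es e IH marg_le].
  have -> : [set x in [::]] = set0 :> {set E} by apply/setP => x; rewrite !inE.
  by rewrite cards0 f0 mul0r.
have f_es_le : f [set x in es] <= #|[set x in es]|%:R * c.
  apply: IH => i i_lt e0.
  have := marg_le i _ e0; rewrite size_rcons ltnS (ltnW i_lt) => /(_ isT).
  by rewrite -cats1 takel_cat ?(ltnW i_lt) // cats1 nth_rcons i_lt.
have Ee : [set x in rcons es e] = e |: [set x in es].
  by apply/setP => x; rewrite !inE mem_rcons in_cons.
rewrite Ee; case: (boolP (e \in [set x in es])) => e_in.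
  by have /setUidPr -> : [set e] \subset [set x in es] by rewrite sub1set.
have := marg_le (size es) _ e; rewrite size_rcons ltnSn nth_rcons ltnn eqxx.
rewrite -cats1 take_size_cat // => /(_ isT) marg_e.
have -> : f (e |: [set x in es]) = f [set x in es] + marg f e [set x in es].
  by rewrite /marg addrC subrK.
by rewrite cardsU1 e_in -natr1 mulrDl mul1r lerD.
Qed.

Lemma greedy_run_approx (Cstar : {set E}) (es : seq E) :
  nonneg_fun f -> normalized f -> monotone_fun f -> submodular f ->
  is_cut src tgt s t Cstar -> greedy_run src tgt f s t es ->
  f [set x in es] <= #|[set x in es]|%:R * f Cstar.
Proof.
move=> f_ge0 f0 f_mon f_sub Cstar_cut [steps _].
apply: le_card_mul_of_marg_le => // i i_lt e0.
exact: greedy_step_marg_le f_ge0 f_mon f_sub Cstar_cut (steps i i_lt e0).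
Qed.

End Greedy.

Section Cardinality.
Variables (R : realFieldType) (T : finType).

Definition card_fun (A : {set T}) : R := #|A|%:R.

Lemma card_fun_props :
  [/\ nonneg_fun card_fun, normalized card_fun,
      monotone_fun card_fun & submodular card_fun].
Proof.
rewrite /nonneg_fun /normalized /monotone_fun /submodular /card_fun.
split=> [A|||A B]; first by rewrite ler0n.
- by rewrite cards0.
- by move=> A B AB; rewrite ler_nat subset_leq_card.
- by rewrite -!natrD cardsUI.
Qed.

Lemma marg_card_fun e (C : {set T}) : e \notin C -> marg card_fun e C = 1.
Proof. by move=> eC; rewrite /marg /card_fun cardsU1 eC natrD addrK. Qed.

End Cardinality.

Section Tight.
Variables (R : realFieldType) (n : nat).

Definition tight_vertex := 'I_3.
Definition tight_edge := option 'I_n.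
Definition tight_s : tight_vertex := @Ordinal 3 0 isT.
Definition tight_m : tight_vertex := @Ordinal 3 1 isT.
Definition tight_t : tight_vertex := @Ordinal 3 2 isT.

Definition tight_src (e : tight_edge) : tight_vertex :=
  if e is Some _ then tight_s else tight_m.
Definition tight_tgt (e : tight_edge) : tight_vertex :=
  if e is Some _ then tight_m else tight_t.

Definition tight_run : seq tight_edge := [seq Some i | i <- enum 'I_n].

Lemma tight_path i :
  st_path tight_src tight_tgt tight_s tight_t [:: Some i; None].
Proof. by []. Qed.

Lemma tight_path_inv p :
  st_path tight_src tight_tgt tight_s tight_t p ->
  exists i, p = [:: Some i; None].
Proof. by case: p => [|[i|] [|[j|] [|[k|] p]]] /andP [] //; exists i. Qed.

Lemma tight_cut : is_cut tight_src tight_tgt tight_s tight_t [set None].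
Proof. by move=> p /tight_path_inv [i ->] /=; rewrite !inE orbT. Qed.

Lemma tight_cut_nonempty C :
  is_cut tight_src tight_tgt tight_s tight_t C -> (0 < n)%N -> C != set0.
Proof.
move=> C_cut n_gt0; have /hasP [e _ eC] := C_cut _ (tight_path (Ordinal n_gt0)).
by apply/set0Pn; exists e.
Qed.

Lemma tight_run_uniq : uniq tight_run.
Proof. by rewrite map_inj_uniq ?enum_uniq // => i j []. Qed.

Lemma tight_greedy_run :
  greedy_run tight_src tight_tgt (@card_fun R _) tight_s tight_t tight_run.
Proof.
split.
  move=> i i_lt e0; set C := [set x in take i tight_run].
  have /mapP [j _ Ej] := mem_nth e0 i_lt.
  have jC : Some j \notin C.
    by rewrite inE -Ej in_take ?mem_nth // index_uniq ?ltnn ?tight_run_uniq.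
  have NoneC : None \notin C.
    by rewrite inE; apply/negP => /mem_take /mapP [].
  rewrite Ej; exists [:: Some j; None]; split.
  - split=> [|Q _]; first exact: tight_path.
    by rewrite !ylenE /= (negbTE jC) (negbTE NoneC) ler_nat.
  - by rewrite ylen_lt1; apply/hasPn => x; rewrite mem_seq2 => /pred2P [] ->.
  - exact: mem_head.
  - by move=> e'; rewrite mem_seq2 => /pred2P [] ->; rewrite !marg_card_fun.
move=> [P [[/tight_path_inv [i ->] _]]].
by rewrite ylen_lt1 /= inE map_f ?mem_enum.
Qed.

Lemma tight_run_card : #|[set x in tight_run]| = n.
Proof.
by rewrite cardsE (card_uniqP tight_run_uniq) size_map size_enum_ord.
Qed.

End Tight.

Theorem lemma8 (R : realFieldType) :
  (* approximation guarantee *)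
  (forall (V E : finType) (src tgt : E -> V) (s t : V) (f : {set E} -> R)
          (Cstar : {set E}) (es : seq E),
     nonneg_fun f -> normalized f -> monotone_fun f -> submodular f ->
     is_cut src tgt s t Cstar ->
     (forall C, is_cut src tgt s t C -> f Cstar <= f C) ->
     greedy_run src tgt f s t es ->
     f [set x in es] <= #|[set x in es]|%:R * f Cstar)
  /\
  (* tightness: for every n >= 1 some instance and run attain the bound *)
  (forall n : nat, (0 < n)%N ->
     exists (V E : finType) (src tgt : E -> V) (s t : V) (f : {set E} -> R)
            (Cstar : {set E}) (es : seq E),
       [/\ nonneg_fun f, normalized f, monotone_fun f & submodular f] /\
       [/\ is_cut src tgt s t Cstar,
           (forall C, is_cut src tgt s t C -> f Cstar <= f C) &
           greedy_run src tgt f s t es] /\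
       [/\ #|[set x in es]| = n, 0 < f Cstar &
           f [set x in es] = #|[set x in es]|%:R * f Cstar]).
Proof.
split=> [V E src tgt s t f Cstar es f_ge0 f0 f_mon f_sub Cstar_cut _ run|n n_gt0].
  exact: greedy_run_approx f_ge0 f0 f_mon f_sub Cstar_cut run.
exists (tight_vertex : finType), (tight_edge n : finType), (@tight_src n),
  (@tight_tgt n), tight_s, tight_t, (@card_fun R _), [set None], (tight_run n).
split; [exact: card_fun_props | split; [split|]].
- exact: tight_cut.
- move=> C /tight_cut_nonempty /(_ n_gt0).
  by rewrite /card_fun cards1 ler_nat card_gt0.
- exact: tight_greedy_run.
- by rewrite /card_fun cards1 mulr1 tight_run_card; split; rewrite ?ltr01.
Qed.
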